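(* Let $M\in\bar{\mathcal{O}}$ be indecomposable. Then every $\varphi\in\operatorname{End}_{\bar{\mathcal{O}}}(M)$ is either an automorphism or locally nilpotent (i.e. for every $v\in M$ there is $k\ge0$ with $\varphi^k(v)=0$).
   Context: $\mathbb{K}$ is an algebraically closed field of characteristic $0$. $\mathfrak{g}=\bigcup_{n\ge1}\mathfrak{g}_n$ is a root-reductive Lie algebra (nested finite-dimensional reductive Lie algebras with nested Cartan subalgebras, each inclusion $\mathfrak{g}_n\hookrightarrow\mathfrak{g}_{n+1}$ a root inclusion). $\mathfrak{h}$ is a splitting maximal toral subalgebra ($\mathfrak{h}\cap\mathfrak{g}_n$ maximal toral in $\mathfrak{g}_n$, $\mathfrak{g}=\mathfrak{h}\oplus\bigoplus_{\alpha\in\Delta}\mathfrak{g}^\alpha$). $\mathfrak{b}=\mathfrak{h}\oplus\mathfrak{n}$, $\mathfrak{n}=\bigoplus_{\alpha\in\Delta^+}\mathfrak{g}^\alpha$, is a splitting Borel subalgebra given by positive roots $\Delta^+$, assumed Dynkin (generated by $\mathfrak{h}$ and the simple root spaces). $\bar{\mathcal{O}}$ is the full subcategory of $\mathfrak{g}$-modules that are $\mathfrak{h}$-weight modules with finite-dimensional weight spaces and are locally $\mathfrak{n}$-finite. *)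

From HB Require Import structures.
From mathcomp Require Import all_boot all_order all_algebra.
Set Implicit Arguments. Unset Strict Implicit. Unset Printing Implicit Defensive.
Import Order.TTheory GRing.Theory Num.Theory.
Local Open Scope ring_scope.

Section LinAlg.
Variables (K : fieldType) (V : lmodType K).

Definition span_seq (s : seq V) (v : V) : Prop :=
  exists c : seq K, v = \sum_(i < size s) c`_i *: s`_i.

Definition in_span (A : V -> Prop) (v : V) : Prop :=
  exists s : seq V, (forall i : 'I_(size s), A s`_i) /\ span_seq s v.

Definition subspace (S : V -> Prop) : Prop :=
  S 0 /\ forall (a : K) x y, S x -> S y -> S (a *: x + y).

Definition fin_dim (S : V -> Prop) : Prop :=
  subspace S /\ exists s : seq V, (forall i : 'I_(size s), S s`_i) /\
    forall v, S v -> span_seq s v.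

Definition linear_map (f : V -> V) : Prop :=
  forall (a : K) u v, f (a *: u + v) = a *: f u + f v.
End LinAlg.

Section Lie.
Variables (K : fieldType) (g : lmodType K) (br : g -> g -> g).

Definition is_lie_bracket : Prop :=
  (forall (a : K) x y z, br (a *: x + y) z = a *: br x z + br y z) /\
  (forall (a : K) x y z, br z (a *: x + y) = a *: br z x + br z y) /\
  (forall x, br x x = 0) /\
  (forall x y z, br x (br y z) + br y (br z x) + br z (br x y) = 0).

Definition subalg (S : g -> Prop) : Prop :=
  subspace S /\ forall x y, S x -> S y -> S (br x y).

Definition gen_subalg (A : g -> Prop) (x : g) : Prop :=
  forall S, subalg S -> (forall y, A y -> S y) -> S x.

Definition derived (S : g -> Prop) : g -> Prop :=
  in_span (fun z => exists x y, S x /\ S y /\ z = br x y).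

Definition solvable (S : g -> Prop) : Prop :=
  exists k, forall x, iter k derived S x -> x = 0.

Definition ideal_of (S I : g -> Prop) : Prop :=
  subspace I /\ (forall x, I x -> S x) /\ forall x y, S x -> I y -> I (br x y).

Definition center (S : g -> Prop) (x : g) : Prop :=
  S x /\ forall y, S y -> br x y = 0.

(* reductive (Humphreys 19.1): finite-dimensional with Rad S = Z(S) *)
Definition reductive (S : g -> Prop) : Prop :=
  subalg S /\ fin_dim S /\
  forall I, ideal_of S I -> solvable I -> forall x, I x -> center S x.

Definition ad_semisimple_on (S : g -> Prop) (x : g) : Prop :=
  forall v, S v -> in_span (fun w => S w /\ exists c : K, br x w = c *: w) v.

Definition toral_in (S T : g -> Prop) : Prop :=
  subalg T /\ (forall x, T x -> S x) /\ forall x, T x -> ad_semisimple_on S x.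

Definition max_toral_in (S T : g -> Prop) : Prop :=
  toral_in S T /\ forall T', toral_in S T' -> (forall x, T x -> T' x) ->
    forall x, T' x -> T x.

(* root space of S w.r.t. H for the functional alpha (only its values on H matter) *)
Definition root_space (S H : g -> Prop) (alpha : g -> K) (x : g) : Prop :=
  S x /\ forall y, H y -> br y x = alpha y *: x.

Definition is_root (S H : g -> Prop) (alpha : g -> K) : Prop :=
  (exists y, H y /\ alpha y != 0) /\ exists x, x != 0 /\ root_space S H alpha x.

Definition agree_on (H : g -> Prop) (a b : g -> K) : Prop :=
  forall y, H y -> a y = b y.

Definition setT_g : g -> Prop := fun _ => True.

(* g = \bigcup g_n, g_n finite-dim reductive, nested Cartan (= maximal toral)
   subalgebras h_n, each inclusion g_n -> g_{n+1} a root inclusion *)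
Definition root_reductive (gn hn : nat -> g -> Prop) : Prop :=
  (forall n, reductive (gn n)) /\
  (forall n x, gn n x -> gn n.+1 x) /\
  (forall x, exists n, gn n x) /\
  (forall n, max_toral_in (gn n) (hn n)) /\
  (forall n x, hn n x -> hn n.+1 x) /\
  (forall n alpha, is_root (gn n) (hn n) alpha ->
     exists beta, is_root (gn n.+1) (hn n.+1) beta /\
       forall x, root_space (gn n) (hn n) alpha x ->
                 root_space (gn n.+1) (hn n.+1) beta x).

Definition splitting_max_toral (gn : nat -> g -> Prop) (h : g -> Prop) : Prop :=
  max_toral_in setT_g h /\
  (forall n, max_toral_in (gn n) (fun x => h x /\ gn n x)) /\
  (forall x, in_span (fun y => h y \/
       exists alpha, is_root setT_g h alpha /\ root_space setT_g h alpha y) x).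

(* Delta^+ : a positive system of roots (Delta = Delta^+ disjoint-union -Delta^+,
   closed under addition); predicates on functionals, compatible with
   agreement on h *)
Definition positive_system (h : g -> Prop) (pos : (g -> K) -> Prop) : Prop :=
  (forall a, pos a -> is_root setT_g h a) /\
  (forall a b, agree_on h a b -> pos a -> pos b) /\
  (forall a, is_root setT_g h a -> pos a \/ pos (fun x => - a x)) /\
  (forall a, pos a -> ~ pos (fun x => - a x)) /\
  (forall a b, pos a -> pos b -> is_root setT_g h (fun x => a x + b x) ->
     pos (fun x => a x + b x)).

Definition nil_part (h : g -> Prop) (pos : (g -> K) -> Prop) : g -> Prop :=
  in_span (fun y => exists a, pos a /\ root_space setT_g h a y).

Definition borel (h : g -> Prop) (pos : (g -> K) -> Prop) (x : g) : Prop :=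
  exists y z, h y /\ nil_part h pos z /\ x = y + z.

Definition simple_root (h : g -> Prop) (pos : (g -> K) -> Prop) (a : g -> K) : Prop :=
  pos a /\ ~ (exists b c, pos b /\ pos c /\ agree_on h a (fun x => b x + c x)).

Definition dynkin (h : g -> Prop) (pos : (g -> K) -> Prop) : Prop :=
  forall x, borel h pos x <->
    gen_subalg (fun y => h y \/ exists a, simple_root h pos a /\ root_space setT_g h a y) x.

Section Modules.
Variables (M : lmodType K) (act : g -> M -> M).

Definition is_gmodule : Prop :=
  (forall (a : K) x y m, act (a *: x + y) m = a *: act x m + act y m) /\
  (forall (a : K) x m m', act x (a *: m + m') = a *: act x m + act x m') /\
  (forall x y m, act (br x y) m = act x (act y m) - act y (act x m)).

Definition weight_space (h : g -> Prop) (lam : g -> K) (m : M) : Prop :=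
  forall x, h x -> act x m = lam x *: m.

Definition in_Obar (h : g -> Prop) (pos : (g -> K) -> Prop) : Prop :=
  is_gmodule /\
  (forall m, in_span (fun w => exists lam, weight_space h lam w) m) /\
  (forall lam, fin_dim (weight_space h lam)) /\
  (forall m, exists W, fin_dim W /\ W m /\
      forall x w, nil_part h pos x -> W w -> W (act x w)).

Definition submodule (U : M -> Prop) : Prop :=
  subspace U /\ forall x m, U m -> U (act x m).

Definition indecomposable : Prop :=
  (exists m : M, m != 0) /\
  forall U V, submodule U -> submodule V ->
    (forall m, U m -> V m -> m = 0) ->
    (forall m, exists u v, U u /\ V v /\ m = u + v) ->
    (forall m, U m -> m = 0) \/ (forall m, V m -> m = 0).

Definition gmod_endo (phi : M -> M) : Prop :=
  linear_map phi /\ forall x m, phi (act x m) = act x (phi m).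

Definition automorphism (phi : M -> M) : Prop :=
  exists psi, gmod_endo psi /\ (forall m, psi (phi m) = m) /\ (forall m, phi (psi m) = m).

Definition locally_nilpotent (phi : M -> M) : Prop :=
  forall v, exists k, iter k phi v = 0.
End Modules.
End Lie.

(* Fitting's lemma for locally finite endomorphisms.  An endomorphism phi of a
   module in \bar O preserves the finite-dimensional weight spaces, so every
   vector is killed by a nonzero polynomial in phi.  Writing such a polynomial
   as q * X^k with q(0) <> 0, Bezout for the coprime q and X^k splits M into
   M_0 (vectors killed by a power of phi) and M_1 (vectors killed by a
   polynomial with nonzero constant term); both are submodules, phi is
   nilpotent on M_0 and invertible on M_1, so indecomposability leaves only
   the two cases. *)
From HB Require Import structures.
From mathcomp Require Import all_boot all_order all_algebra.
From Stdlib Require Import IndefiniteDescription.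
Set Implicit Arguments. Unset Strict Implicit. Unset Printing Implicit Defensive.
Import Order.TTheory GRing.Theory Num.Theory.
Local Open Scope ring_scope.

Section LinearMap.
Variables (K : fieldType) (M : lmodType K) (f : M -> M) (Hf : linear_map f).

Lemma linear_map0 : f 0 = 0.
Proof.
have := Hf 1 0 0; rewrite scale1r addr0 => E.
by apply: (@addrI _ (f 0)); rewrite addr0 {3}E scale1r.
Qed.

Lemma linear_mapD u v : f (u + v) = f u + f v.
Proof. by rewrite -[u]scale1r Hf !scale1r. Qed.

Lemma linear_mapZ a u : f (a *: u) = a *: f u.
Proof. by rewrite -[a *: u]addr0 Hf linear_map0 addr0. Qed.

Lemma linear_map_sum n (F : 'I_n -> M) : f (\sum_(i < n) F i) = \sum_(i < n) f (F i).
Proof. exact: (big_morph f linear_mapD linear_map0). Qed.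

Lemma linear_map_iter k : linear_map (iter k f).
Proof. by elim: k => [|k IH] a u v //=; rewrite IH Hf. Qed.

End LinearMap.

Lemma comm_iter (T : Type) (f phi : T -> T) :
  (forall m, f (phi m) = phi (f m)) -> forall k m, f (iter k phi m) = iter k phi (f m).
Proof. by move=> Hc; elim=> //= k IH m; rewrite Hc IH. Qed.

Section PolyEval.
Variables (K : fieldType) (M : lmodType K) (phi : M -> M).

Definition peval (p : {poly K}) (m : M) : M :=
  \sum_(i < size p) p`_i *: iter i phi m.

Lemma peval_widen (p : {poly K}) m n : (size p <= n)%N ->
  peval p m = \sum_(i < n) p`_i *: iter i phi m.
Proof.
move=> Hn; rewrite /peval (big_ord_widen _ (fun i => p`_i *: iter i phi m) Hn).
rewrite big_mkcond /=; apply: eq_bigr => i _.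
by case: ifP => // /negbT; rewrite -leqNgt => Hi; rewrite nth_default // scale0r.
Qed.

Lemma pevalD p q m : peval (p + q) m = peval p m + peval q m.
Proof.
set n := maxn (size p) (size q).
rewrite (@peval_widen (p + q) m n) ?size_polyD //.
rewrite (@peval_widen p m n) ?leq_maxl // (@peval_widen q m n) ?leq_maxr //.
by rewrite -big_split; apply: eq_bigr => i _; rewrite coefD scalerDl.
Qed.

Lemma pevalZ a p m : peval (a *: p) m = a *: peval p m.
Proof.
rewrite (@peval_widen (a *: p) m (size p)) ?size_scale_leq //.
by rewrite /peval scaler_sumr; apply: eq_bigr => i _; rewrite coefZ scalerA.
Qed.

Lemma pevalC c m : peval c%:P m = c *: m.
Proof. by rewrite (@peval_widen _ m 1) ?size_polyC_leq1 // big_ord1 coefC. Qed.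

Lemma peval_mulX p m : peval (p * 'X) m = peval p (phi m).
Proof.
rewrite (@peval_widen _ m (size p).+1); last first.
  by apply: leq_trans (size_polyMleq _ _) _; rewrite size_polyX addn2.
rewrite big_ord_recl coefMX scale0r add0r.
by apply: eq_bigr => i _; rewrite coefMX -iterSr.
Qed.

Lemma pevalXn k m : peval 'X^k m = iter k phi m.
Proof.
elim: k m => [|k IH] m; first by rewrite expr0 -[1]/(1%:P) pevalC scale1r.
by rewrite exprSr peval_mulX IH -iterSr.
Qed.

Lemma peval_comm (f : M -> M) : linear_map f -> (forall m, f (phi m) = phi (f m)) ->
  forall p m, f (peval p m) = peval p (f m).
Proof.
move=> Hf Hc p m; rewrite /peval (linear_map_sum Hf); apply: eq_bigr => i _.
by rewrite (linear_mapZ Hf) comm_iter.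
Qed.

Hypothesis Hphi : linear_map phi.

Lemma peval_linear p : linear_map (peval p).
Proof.
move=> a u v; rewrite /peval scaler_sumr -big_split; apply: eq_bigr => i _.
by rewrite (linear_map_iter Hphi) scalerDr !scalerA mulrC.
Qed.

Lemma pevalM p q m : peval (p * q) m = peval p (peval q m).
Proof.
elim/poly_ind: p m => [|p c IH] m.
  by rewrite mul0r /peval size_poly0 !big_ord0.
rewrite mulrDl mulrAC mul_polyC !pevalD pevalZ !peval_mulX IH pevalC.
by rewrite (peval_comm Hphi).
Qed.

Lemma peval_mull_eq0 p q m : peval q m = 0 -> peval (p * q) m = 0.
Proof. by move=> E; rewrite pevalM E (linear_map0 (peval_linear p)). Qed.

Lemma peval_mulr_eq0 p q m : peval q m = 0 -> peval (q * p) m = 0.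
Proof. by rewrite mulrC; apply: peval_mull_eq0. Qed.

End PolyEval.

Section Annihilated.
Variables (K : fieldType) (M : lmodType K) (phi : M -> M) (Hphi : linear_map phi).

Definition annihilated (m : M) : Prop :=
  exists p : {poly K}, p != 0 /\ peval phi p m = 0.

Lemma span_seq_lin_dep (s : seq M) (v : nat -> M) :
  (forall j, span_seq s (v j)) ->
  exists c : 'I_(size s).+1 -> K, (exists j, c j != 0) /\
    \sum_(j < (size s).+1) c j *: v j = 0.
Proof.
move=> Hv; set n := size s.
pose C j := proj1_sig (constructive_indefinite_description _ (Hv j)).
have HC j : v j = \sum_(i < n) (C j)`_i *: s`_i.
  exact: (proj2_sig (constructive_indefinite_description _ (Hv j))).
pose B : 'M[K]_(n.+1, n) := \matrix_(j, i) (C j)`_i.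
have kerB0 : kermx B != 0.
  by rewrite -mxrank_eq0 -lt0n mxrank_ker subn_gt0 ltnS rank_leq_col.
have [x /sub_kermxP xB0 x0] := rowV0Pn kerB0.
exists (x 0); split.
  apply/existsP; apply: contraNT x0 => /existsPn H.
  by apply/eqP/rowP => j; rewrite mxE; apply/eqP; rewrite -[_ == _]negbK H.
under eq_bigr => j _ do rewrite HC scaler_sumr.
rewrite exchange_big /=; apply: big1 => k _.
have := congr1 (fun A : 'M_(1, n) => A 0 k) xB0; rewrite !mxE => E.
rewrite (eq_bigr (fun j => (x 0 j * B j k) *: s`_k)) => [|j _].
  by rewrite -scaler_suml E scale0r.
by rewrite scalerA mxE.
Qed.

Lemma annihilated_fin_dim (S : M -> Prop) : fin_dim S ->
  (forall v, S v -> S (phi v)) -> forall m, S m -> annihilated m.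
Proof.
move=> [_ [s [_ Hs]]] HS m Sm.
have Siter k : S (iter k phi m) by elim: k => //= k; apply: HS.
have [c [[j0 cj0] Hc]] := span_seq_lin_dep (fun k => Hs _ (Siter k)).
exists (\poly_(j < (size s).+1) c (inord j)); split.
  apply: contraNneq cj0 => E; have := congr1 (fun p : {poly K} => p`_j0) E.
  by rewrite coef_poly ltn_ord coef0 inord_val => ->.
rewrite (@peval_widen _ _ phi _ m (size s).+1) ?size_poly // -[RHS]Hc.
by apply: eq_bigr => j _; rewrite coef_poly ltn_ord inord_val.
Qed.

Lemma annihilated0 : annihilated 0.
Proof. by exists 1; rewrite oner_neq0 (linear_map0 (peval_linear Hphi 1)). Qed.

Lemma annihilated_lin_comb a u v :
  annihilated u -> annihilated v -> annihilated (a *: u + v).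
Proof.
move=> [p [p0 Ep]] [q [q0 Eq]]; exists (p * q); rewrite mulf_neq0 //.
by rewrite (peval_linear Hphi) peval_mulr_eq0 // peval_mull_eq0 // scaler0 add0r.
Qed.

Lemma annihilated_in_span (A : M -> Prop) :
  (forall v, A v -> annihilated v) -> forall m, in_span A m -> annihilated m.
Proof.
move=> HA m [s [As [c ->]]].
apply: (big_ind annihilated annihilated0).
  by move=> u v Hu Hv; rewrite -[u]scale1r; apply: annihilated_lin_comb.
move=> i _; rewrite -[_ *: _]addr0.
by apply: annihilated_lin_comb annihilated0; apply: HA.
Qed.

End Annihilated.

Section Bezout.
Variable K : fieldType.

Lemma Bezout_Xn (q : {poly K}) k : q`_0 != 0 ->
  exists u v c, c != 0 /\ u * q + v * 'X^k = c%:P.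
Proof.
move=> q00.
have : coprimep q 'X^k.
  apply: coprimep_expr; have := coprimep_XsubC q 0.
  by rewrite polyC0 subr0 /root horner_coef0 q00.
move=> /Bezout_coprimepP [[u v] /= /eqpf_eq [c c0 E]].
by exists u, v, c; rewrite c0 E -alg_polyC.
Qed.

Lemma poly_split_Xn (p : {poly K}) : p != 0 ->
  exists (q : {poly K}) (k : nat), q`_0 != 0 /\ p = q * 'X^k.
Proof.
move=> p0; have [k [q Hq ->]] := multiplicity_XsubC p 0.
exists q, k; rewrite polyC0 subr0; split => //.
by move: Hq; rewrite p0 /root horner_coef0.
Qed.

End Bezout.

Section Fitting.
Variables (K : fieldType) (M : lmodType K) (phi : M -> M) (Hphi : linear_map phi).

Definition fitting_nil (m : M) : Prop := exists k, iter k phi m = 0.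

Definition fitting_inv (m : M) : Prop :=
  exists q : {poly K}, q`_0 != 0 /\ peval phi q m = 0.

Lemma subspace_fitting_nil : subspace fitting_nil.
Proof.
split; first by exists 0%N.
move=> a u v [k1 E1] [k2 E2]; exists (k1 + k2)%N.
rewrite (linear_map_iter Hphi) {1}addnC !iterD E1 E2.
by rewrite !(linear_map0 (linear_map_iter Hphi _)) scaler0 addr0.
Qed.

Lemma subspace_fitting_inv : subspace fitting_inv.
Proof.
split; first by exists 1; rewrite coef1 oner_neq0 (linear_map0 (peval_linear Hphi 1)).
move=> a u v [q1 [H1 E1]] [q2 [H2 E2]]; exists (q1 * q2); rewrite coef0M mulf_neq0 //.
by rewrite (peval_linear Hphi) peval_mulr_eq0 // peval_mull_eq0 // scaler0 add0r.
Qed.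

Variables (f : M -> M) (Hf : linear_map f) (Hfphi : forall m, f (phi m) = phi (f m)).

Lemma fitting_nil_stable m : fitting_nil m -> fitting_nil (f m).
Proof. by move=> [k E]; exists k; rewrite -comm_iter // E (linear_map0 Hf). Qed.

Lemma fitting_inv_stable m : fitting_inv m -> fitting_inv (f m).
Proof.
by move=> [q [q0 E]]; exists q; rewrite -(peval_comm Hf Hfphi) E (linear_map0 Hf).
Qed.

Lemma fitting_nil_inv_eq0 m : fitting_nil m -> fitting_inv m -> m = 0.
Proof.
move=> [k Ek] [q [q0 Eq]]; have [u [v [c [c0 E]]]] := Bezout_Xn k q0.
have := pevalC phi c m; rewrite -E pevalD !(pevalM Hphi) Eq pevalXn Ek.
rewrite !(linear_map0 (peval_linear Hphi _)) addr0 => /esym/eqP.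
by rewrite scaler_eq0 (negbTE c0) => /eqP.
Qed.

Lemma fitting_inv_in_image m : fitting_inv m -> exists a, phi a = m.
Proof.
move=> [q [q0 Eq]]; have [a [b [c [c0 E]]]] := Bezout_Xn 1 q0.
exists (c^-1 *: peval phi b m).
have := pevalC phi c m; rewrite -E pevalD !(pevalM Hphi) Eq pevalXn.
rewrite (linear_map0 (peval_linear Hphi _)) add0r => Ec.
by rewrite (linear_mapZ Hphi) (peval_comm Hphi) // Ec scalerA mulVf // scale1r.
Qed.

Lemma fitting_decomposition m : annihilated phi m ->
  exists u v, fitting_nil u /\ fitting_inv v /\ m = u + v.
Proof.
move=> [p [p0 Ep]]; have [q [k [q0 Epq]]] := poly_split_Xn p0.
have [u [v [c [c0 E]]]] := Bezout_Xn k q0.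
exists (c^-1 *: peval phi (u * q) m), (c^-1 *: peval phi (v * 'X^k) m).
split; [|split].
- exists k; rewrite -pevalXn (linear_mapZ (peval_linear Hphi _)) -(pevalM Hphi).
  by rewrite mulrCA (mulrC 'X^k) -Epq peval_mull_eq0 // scaler0.
- exists q; split => //.
  rewrite (linear_mapZ (peval_linear Hphi _)) -(pevalM Hphi).
  by rewrite mulrCA -Epq peval_mull_eq0 // scaler0.
- by rewrite -scalerDr -pevalD E pevalC scalerA mulVf // scale1r.
Qed.

End Fitting.

Section GModule.
Variables (K : fieldType) (g : lmodType K) (br : g -> g -> g).
Variables (M : lmodType K) (act : g -> M -> M) (Hact : is_gmodule br act).
Variables (phi : M -> M) (Hphi : gmod_endo act phi).

Lemma linear_map_act x : linear_map (act x).
Proof. by case: Hact => _ [HL _] a u v; apply: HL. Qed.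

Lemma gmod_endo_comm x m : act x (phi m) = phi (act x m).
Proof. by case: Hphi => _ ->. Qed.

Lemma submodule_fitting_nil : submodule act (fitting_nil phi).
Proof.
split; first exact: subspace_fitting_nil Hphi.1.
by move=> x; apply: fitting_nil_stable (linear_map_act x) (gmod_endo_comm x).
Qed.

Lemma submodule_fitting_inv : submodule act (fitting_inv phi).
Proof.
split; first exact: subspace_fitting_inv Hphi.1.
by move=> x; apply: fitting_inv_stable (linear_map_act x) (gmod_endo_comm x).
Qed.

Lemma weight_space_stable (h : g -> Prop) lam m :
  weight_space act h lam m -> weight_space act h lam (phi m).
Proof. by move=> Hm x hx; rewrite gmod_endo_comm Hm // (linear_mapZ Hphi.1). Qed.

Lemma automorphism_of_bijective :
  (forall a b, phi a = phi b -> a = b) -> (forall m, exists a, phi a = m) ->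
  automorphism act phi.
Proof.
case: Hphi => Hlin Hcomm inj surj.
pose psi m := proj1_sig (constructive_indefinite_description _ (surj m)).
have psiK m : phi (psi m) = m.
  exact: (proj2_sig (constructive_indefinite_description _ (surj m))).
exists psi; split; [split|split] => [a u v|x m|m|m]; apply: inj.
- by rewrite Hlin !psiK.
- by rewrite psiK Hcomm psiK.
- by rewrite psiK.
- by rewrite psiK.
Qed.

End GModule.

Theorem mainTheorem8 (K : closedFieldType) (charK0 : [pchar K] =i pred0)
  (g : lmodType K) (br : g -> g -> g) (Hlie : is_lie_bracket br)
  (gn hn : nat -> g -> Prop) (Hrr : root_reductive br gn hn)
  (h : g -> Prop) (Hh : splitting_max_toral br gn h)
  (pos : (g -> K) -> Prop) (Hpos : positive_system br h pos)
  (Hdyn : dynkin br h pos)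
  (M : lmodType K) (act : g -> M -> M) (HM : in_Obar br act h pos)
  (Hind : indecomposable act)
  (phi : M -> M) (Hphi : gmod_endo act phi) :
  automorphism act phi \/ locally_nilpotent phi.
Proof.
case: HM => [Hact [Hwt [Hfd _]]]; have Hlin := Hphi.1.
have Hann m : annihilated phi m.
  apply: (annihilated_in_span Hlin _ (Hwt m)) => w [lam Hw].
  by apply: (annihilated_fin_dim (Hfd lam) _ Hw); apply: weight_space_stable.
have Hsum m := fitting_decomposition Hlin (Hann m).
have [nil0|inv0] := Hind.2 _ _ (submodule_fitting_nil Hact Hphi)
  (submodule_fitting_inv Hact Hphi) (fitting_nil_inv_eq0 Hlin) Hsum.
- left; apply: (automorphism_of_bijective Hphi) => [a b Eab|m].
    apply/eqP; rewrite -subr_eq0; apply/eqP/nil0; exists 1%N.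
    by rewrite /= -scaleN1r addrC Hlin Eab scaleN1r addNr.
  have [u [v [nil_u [inv_v ->]]]] := Hsum m.
  by rewrite (nil0 u nil_u) add0r; apply: fitting_inv_in_image.
- right => m; have [u [v [nil_u [inv_v ->]]]] := Hsum m.
  by rewrite (inv0 v inv_v) addr0.
Qed.
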